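(* Let $\mathcal{X},\mathcal{Y}$ be finite sets, $P$ and $Q$ joint probability mass functions on $\mathcal{X}\times\mathcal{Y}$ that are strictly positive everywhere, $q\in\mathbb{R}$ and $\rho>0$. Let $G_Q^\ast$ be a conditional guessing function such that for all $y$ and $x,x'$, $G_Q^\ast(x|y)<G_Q^\ast(x'|y)$ implies $Q_q(x|y)\ge Q_q(x'|y)$. Then, with $E_q$ taken with respect to $P$, $$ E_q\left[G_Q^\ast(X|Y)^\rho\right]\;\leq\;\sum_{y\in\mathcal{Y}}P_q(\cdot,y)\sum_{x\in\mathcal{X}}P_q(x|y)\left[\sum_{x'\in\mathcal{X}}\left(\frac{Q_q(x'|y)}{Q_q(x|y)}\right)^{\frac{1}{1+\rho}}\right]^{\rho}. $$
   Context: A conditional guessing function is a map $G(\cdot|\cdot)$ on $\mathcal{X}\times\mathcal{Y}$ such that for each $y$, $x\mapsto G(x|y)$ is a bijection from $\mathcal{X}$ onto $\{1,\dots,|\mathcal{X}|\}$. The $q$-normalized expectation under $P$ is $E_q[F(X,Y)]=\frac{\sum_{x,y}F(x,y)P(x,y)^q}{\sum_{x,y}P(x,y)^q}$. For a strictly positive joint pmf $R$ on $\mathcal{X}\times\mathcal{Y}$: $R(x|y)=R(x,y)/\sum_{x'}R(x',y)$, $R_q(x|y)=\frac{R(x|y)^q}{\sum_{x'}R(x'|y)^q}$, and $R_q(\cdot,y)=\frac{\sum_{x}R(x,y)^q}{\sum_{x',y'}R(x',y')^q}$; this applies to $R=P$ and $R=Q$. *)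

From Stdlib Require Import Reals.
From mathcomp Require Import all_boot.
Set Implicit Arguments. Unset Strict Implicit. Unset Printing Implicit Defensive.

Local Open Scope R_scope.

Definition rsum (T : finType) (f : T -> R) : R := \big[Rplus/0]_(t : T) f t.

Definition strictly_pos_pmf (X Y : finType) (Pj : X -> Y -> R) : Prop :=
  (forall x y, 0 < Pj x y) /\ rsum (fun x => rsum (fun y => Pj x y)) = 1.

Definition cond (X Y : finType) (Pj : X -> Y -> R) (x : X) (y : Y) : R :=
  Pj x y / rsum (fun x' => Pj x' y).

Definition condq (X Y : finType) (Pj : X -> Y -> R) (q : R) (x : X) (y : Y) : R :=
  Rpower (cond Pj x y) q / rsum (fun x' => Rpower (cond Pj x' y) q).

Definition totq (X Y : finType) (Pj : X -> Y -> R) (q : R) : R :=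
  rsum (fun x => rsum (fun y => Rpower (Pj x y) q)).

Definition margq (X Y : finType) (Pj : X -> Y -> R) (q : R) (y : Y) : R :=
  rsum (fun x => Rpower (Pj x y) q) / totq Pj q.

Definition Eq (X Y : finType) (Pj : X -> Y -> R) (q : R) (F : X -> Y -> R) : R :=
  rsum (fun x => rsum (fun y => F x y * Rpower (Pj x y) q)) / totq Pj q.

Definition guessing_fun (X Y : finType) (G : X -> Y -> nat) : Prop :=
  forall y : Y,
    (forall x, (1 <= G x y <= #|X|)%N) /\
    (forall x x', G x y = G x' y -> x = x') /\
    (forall k, (1 <= k <= #|X|)%N -> exists x, G x y = k).

(* Write w(x|y) = Q_q(x|y) and S(x,y) = sum_x' (w(x'|y) / w(x|y))^(1/(1+rho)).
   The proof has two independent ingredients.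

   1. A pointwise bound on the guess count.  A guessing function is a
      bijection onto {1,...,|X|} for each y, so at least G(x|y) guesses x'
      satisfy G(x'|y) <= G(x|y); for each of them w(x'|y) >= w(x|y) because G
      guesses in decreasing order of w, hence the ratio term is >= 1, while all
      other terms are positive.  Therefore G(x|y) <= S(x,y).

   2. The q-tilted chain rule  E_q[F] = sum_y P_q(.,y) sum_x P_q(x|y) F(x,y),
      which follows from P_q(.,y) P_q(x|y) = P(x,y)^q / sum_{x',y'} P(x',y')^q.

   The theorem follows by applying the chain rule to F = G^rho and bounding
   each term with (1), using monotonicity of t |-> t^rho for rho > 0. *)

From Stdlib Require Import Reals Lra.
From HB Require Import structures.
From mathcomp Require Import all_boot.
Set Implicit Arguments. Unset Strict Implicit.
Local Open Scope R_scope.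

(* Registering (Rplus, 0) as a commutative monoid makes the bigop theory
   (exchange_big, bigD1, ...) available for [rsum]. *)
Lemma Rplus_associative : associative Rplus.
Proof. by move=> a b c; rewrite Rplus_assoc. Qed.

HB.instance Definition _ :=
  Monoid.isComLaw.Build R 0 Rplus Rplus_associative Rplus_comm Rplus_0_l.

Section FiniteSums.
Variable T : finType.
Implicit Types (f g : T -> R).

Lemma rsum_le f g : (forall t, f t <= g t) -> rsum f <= rsum g.
Proof.
move=> fg; apply: (big_rec2 (fun a b => a <= b)); first exact: Rle_refl.
by move=> t a b _ ab; apply: Rplus_le_compat.
Qed.

Lemma rsum_mulr f c : rsum (fun t => f t * c) = rsum f * c.
Proof.
apply: (big_rec2 (fun a b => a = b * c)); first by ring.
by move=> t a b _ ->; ring.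
Qed.

Lemma rsum_pos f (t0 : T) : (forall t, 0 < f t) -> 0 < rsum f.
Proof.
move=> fpos; rewrite /rsum (bigD1 t0) //=.
apply: Rplus_lt_le_0_compat; first exact: fpos.
apply: (big_ind (fun a => 0 <= a)); first exact: Rle_refl.
  by move=> a b; apply: Rplus_le_le_0_compat.
by move=> t _; apply: Rlt_le.
Qed.

Lemma card_le_rsum (A : {set T}) f :
  (forall t, 0 <= f t) -> (forall t, t \in A -> 1 <= f t) -> INR #|A| <= rsum f.
Proof.
move=> f_ge0 f_ge1.
have -> : INR #|A| = rsum (fun t => if t \in A then 1 else 0).
  rewrite -sum1_card big_mkcond /rsum.
  rewrite (big_morph INR plus_INR (erefl (INR 0))).
  by apply: eq_bigr => t _; case: (t \in A).
by apply: rsum_le => t; case: ifP => [/f_ge1|_].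
Qed.

End FiniteSums.

Lemma rsum_exchange (X Y : finType) (F : X -> Y -> R) :
  rsum (fun x => rsum (fun y => F x y)) = rsum (fun y => rsum (fun x => F x y)).
Proof. exact: exchange_big. Qed.

Lemma Rpower_pos a b : 0 < Rpower a b.
Proof. exact: exp_pos. Qed.

Lemma Rpower_div a s q : 0 < a -> 0 < s ->
  Rpower (a / s) q = Rpower a q / Rpower s q.
Proof.
move=> a_pos s_pos; rewrite /Rdiv -Rpower_mult_distr //; last exact: Rinv_0_lt_compat.
by congr (_ * _); rewrite /Rpower ln_Rinv // -Ropp_mult_distr_r exp_Ropp.
Qed.

Lemma Rpower_ratio_ge1 a b s : 0 < b -> b <= a -> 0 <= s -> 1 <= Rpower (a / b) s.
Proof.
move=> b_pos ba s_ge0.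
have ratio_ge1 : 1 <= a / b.
  apply: (Rmult_le_reg_r b) => //.
  rewrite /Rdiv Rmult_assoc Rinv_l; lra.
by rewrite -(Rpower_O (a / b)); [apply: Rle_Rpower | lra].
Qed.

Section TiltedDistributions.
Variables (X Y : finType) (Pj : X -> Y -> R) (q : R).

Lemma condq_pos x y : 0 < condq Pj q x y.
Proof.
apply: Rdiv_lt_0_compat; first exact: Rpower_pos.
by apply: (rsum_pos x) => x'; apply: Rpower_pos.
Qed.

(* The tilted marginal is nonnegative (it vanishes when X is empty). *)
Lemma margq_ge0 y : 0 <= margq Pj q y.
Proof.
case: (pickP (@predT X)) => [x _ | X_empty].
  apply/Rlt_le/Rdiv_lt_0_compat; first by apply: (rsum_pos x) => x'; apply: Rpower_pos.
  by apply: (rsum_pos x) => x'; apply: (rsum_pos y) => y'; apply: Rpower_pos.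
rewrite /margq /rsum big_pred0 // /Rdiv Rmult_0_l; exact: Rle_refl.
Qed.

Hypothesis Pj_pos : forall x y, 0 < Pj x y.

Lemma condq_joint x y :
  condq Pj q x y = Rpower (Pj x y) q / rsum (fun x' => Rpower (Pj x' y) q).
Proof.
set s := rsum (fun x' => Pj x' y).
have s_pos : 0 < s by apply: (rsum_pos x).
have sq_pos : 0 < Rpower s q by apply: Rpower_pos.
have sumq_pos : 0 < rsum (fun x' => Rpower (Pj x' y) q).
  by apply: (rsum_pos x) => x'; apply: Rpower_pos.
rewrite /condq /cond -/s Rpower_div //.
have -> : rsum (fun x' => Rpower (Pj x' y / s) q)
          = rsum (fun x' => Rpower (Pj x' y) q) * / Rpower s q.
  by rewrite -rsum_mulr; apply: eq_bigr => x' _; rewrite Rpower_div.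
by field; split; apply: Rgt_not_eq.
Qed.

Lemma margq_condq x y :
  margq Pj q y * condq Pj q x y = Rpower (Pj x y) q / totq Pj q.
Proof.
have sumq_pos : 0 < rsum (fun x' => Rpower (Pj x' y) q).
  by apply: (rsum_pos x) => x'; apply: Rpower_pos.
have tot_pos : 0 < totq Pj q.
  by apply: (rsum_pos x) => x'; apply: (rsum_pos y) => y'; apply: Rpower_pos.
rewrite condq_joint /margq; field; split; exact: Rgt_not_eq.
Qed.

Lemma Eq_chain_rule (F : X -> Y -> R) :
  Eq Pj q F = rsum (fun y => margq Pj q y * rsum (fun x => condq Pj q x y * F x y)).
Proof.
have -> : Eq Pj q F
    = rsum (fun x => rsum (fun y => F x y * Rpower (Pj x y) q / totq Pj q)).
  by rewrite /Eq /Rdiv -rsum_mulr; apply: eq_bigr => x _; rewrite -rsum_mulr.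
rewrite rsum_exchange; apply: eq_bigr => y _.
rewrite Rmult_comm -rsum_mulr; apply: eq_bigr => x _.
rewrite /Rdiv Rmult_assoc -/(Rdiv _ _) -margq_condq; ring.
Qed.

End TiltedDistributions.

Section GuessingFunctions.
Variables (X Y : finType) (G : X -> Y -> nat).
Hypothesis HG : guessing_fun G.

(* The guess count of x is at most the number of x' guessed no later than x:
   the x' with G(x'|y) = 1, ..., G(x|y) exist and are distinct. *)
Lemma guess_le_card_earlier x y :
  (G x y <= #|[set x' | G x' y <= G x y]|)%N.
Proof.
have [G_range [G_inj G_onto]] := HG y.
set n := G x y.
pose guess_at (k : 'I_n) := odflt x [pick x' | G x' y == k.+1].
have guess_atE (k : 'I_n) : G (guess_at k) y = k.+1.
  rewrite /guess_at; case: pickP => [x' /eqP //| none].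
  have [|x' Gx'] := G_onto k.+1.
    by rewrite /= (leq_trans (ltn_ord k)) //; case/andP: (G_range x).
  by move: (none x'); rewrite Gx' eqxx.
have guess_at_inj : injective guess_at.
  by move=> k1 k2 E; apply: val_inj; have := guess_atE k1; rewrite E guess_atE => -[].
rewrite -{1}(card_ord n) -cardsT -(card_imset _ guess_at_inj).
apply: subset_leq_card; apply/subsetP => _ /imsetP [k _ ->].
by rewrite inE guess_atE (ltn_ord k).
Qed.

Lemma guess_pos x y : 0 < INR (G x y).
Proof. by apply/lt_0_INR/ltP; have [G_range _] := HG y; case/andP: (G_range x). Qed.

Lemma guess_le_ratio_sum (w : X -> Y -> R) (s : R) :
  (forall x y, 0 < w x y) ->
  (forall y x x', (G x y < G x' y)%N -> w x y >= w x' y) ->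
  0 <= s ->
  forall x y, INR (G x y) <= rsum (fun x' => Rpower (w x' y / w x y) s).
Proof.
move=> w_pos w_ord s_ge0 x y.
have wxy_pos := w_pos x y.
apply: Rle_trans (le_INR _ _ (leP (guess_le_card_earlier x y))) _.
apply: card_le_rsum => [x'|x']; first exact/Rlt_le/Rpower_pos.
rewrite inE leq_eqVlt => /orP [/eqP same | earlier].
  by have [_ [G_inj _]] := HG y; rewrite (G_inj _ _ same); apply: Rpower_ratio_ge1 => //; lra.
by apply: Rpower_ratio_ge1 => //; apply: Rge_le; apply: w_ord.
Qed.

End GuessingFunctions.

Theorem theorem4 (X Y : finType) (P Q : X -> Y -> R) (q rho : R)
  (G : X -> Y -> nat)
  (HP : strictly_pos_pmf P) (HQ : strictly_pos_pmf Q) (Hrho : 0 < rho)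
  (HG : guessing_fun G)
  (Hord : forall (y : Y) (x x' : X), (G x y < G x' y)%N ->
            condq Q q x y >= condq Q q x' y) :
  Eq P q (fun x y => Rpower (INR (G x y)) rho) <=
  rsum (fun y => margq P q y *
    rsum (fun x => condq P q x y *
      Rpower (rsum (fun x' => Rpower (condq Q q x' y / condq Q q x y) (1 / (1 + rho)))) rho)).
Proof.
case: HP => P_pos _.
have exponent_ge0 : 0 <= 1 / (1 + rho) by apply/Rlt_le/Rdiv_lt_0_compat; lra.
have count_bound := guess_le_ratio_sum HG (condq_pos Q q) Hord exponent_ge0.
rewrite Eq_chain_rule //; apply: rsum_le => y.
apply: Rmult_le_compat_l; first exact: margq_ge0.
apply: rsum_le => x; apply: Rmult_le_compat_l; first by apply/Rlt_le; apply: condq_pos.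
apply: Rle_Rpower_l; first lra.
by split; [apply: guess_pos | apply: count_bound].
Qed.
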